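(* Let $0<q<1$ and let $\lambda$ be a partition with at most $n$ parts. Writing $x=(x_1,\dots,x_n)=(q^{u_1},\dots,q^{u_n})$, the function $u\mapsto W_\lambda(q^{u_1},\dots,q^{u_n};q,p,t,a,b)$ is elliptic in each variable $u_i$; that is, for each $i$ it is invariant under $u_i\mapsto u_i+2\pi\sqrt{-1}/\log q$ and under $u_i\mapsto u_i+\log p/\log q$ (the latter meaning $x_i\mapsto px_i$).
   Context: Fix $p\in\mathbb{C}$ with $0<|p|<1$; parameters generic. $E(x)=(x;p)_\infty(p/x;p)_\infty$. For integer $m\ge0$, $(a)_m=\prod_{k=0}^{m-1}E(aq^k)$, for $m<0$, $(a)_m=1/(aq^m)_{-m}$; for a partition $\lambda$ with $n$ parts $(a)_\lambda=\prod_{i=1}^n(at^{1-i})_{\lambda_i}$; several arguments denote products; integer subscripts denote the single-integer symbol. For $n$-part partitions with $\lambda_1\ge\mu_1\ge\dots\ge\lambda_n\ge\mu_n$, $\lambda_{n+1}=\mu_{n+1}=0$, $H_{\lambda/\mu}(q,p,t,b)=\prod_{1\le i<j\le n}\Big\{\frac{(q^{\mu_i-\mu_{j-1}}t^{j-i})_{\mu_{j-1}-\lambda_j}(q^{\lambda_i+\lambda_j}t^{3-j-i}b)_{\mu_{j-1}-\lambda_j}}{(q^{\mu_i-\mu_{j-1}+1}t^{j-i-1})_{\mu_{j-1}-\lambda_j}(q^{\lambda_i+\lambda_j+1}t^{2-j-i}b)_{\mu_{j-1}-\lambda_j}}\frac{(q^{\lambda_i-\mu_{j-1}+1}t^{j-i-1})_{\mu_{j-1}-\lambda_j}}{(q^{\lambda_i-\mu_{j-1}}t^{j-i})_{\mu_{j-1}-\lambda_j}}\Big\}\prod_{1\le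 i<j-1\le n}\frac{(q^{\mu_i+\lambda_j+1}t^{1-j-i}b)_{\mu_{j-1}-\lambda_j}}{(q^{\mu_i+\lambda_j}t^{2-j-i}b)_{\mu_{j-1}-\lambda_j}}$; for $x\in\mathbb{C}$, $W_{\lambda/\mu}(x;q,p,t,a,b)=H_{\lambda/\mu}\frac{(x^{-1},ax)_\lambda(qbx/t,qb/(axt))_\mu}{(x^{-1},ax)_\mu(qbx,qb/(ax))_\lambda}\prod_{i=1}^n\frac{E(bt^{1-2i}q^{2\mu_i})}{E(bt^{1-2i})}\frac{(bt^{1-2i})_{\mu_i+\lambda_{i+1}}}{(bqt^{-2i})_{\mu_i+\lambda_{i+1}}}t^{i(\mu_i-\lambda_{i+1})}$ (zero if the interlacing fails); recursively $W_{\lambda/\mu}(y,z_1,\dots,z_\ell;q,p,t,a,b)=\sum_\nu W_{\lambda/\nu}(yt^{-\ell};q,p,t,at^{2\ell},bt^\ell)W_{\nu/\mu}(z_1,\dots,z_\ell;q,p,t,a,b)$ over $\nu$ with $\lambda_1\ge\nu_1\ge\dots\ge\lambda_n\ge\nu_n\ge0$; $W_\lambda=W_{\lambda/0}$. *)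

From Stdlib Require Import Reals ZArith List Lia Bool.
From Coquelicot Require Import Coquelicot.
Import ListNotations.
Open Scope C_scope.

Definition C0 : C := RtoC 0%R.
Definition C1 : C := RtoC 1%R.

Definition Cexp (z : C) : C :=
  (exp (fst z) * cos (snd z), exp (fst z) * sin (snd z))%R.

Definition cpowZ (z : C) (k : Z) : C :=
  match k with
  | Z0 => C1
  | Zpos n => Cpow z (Pos.to_nat n)
  | Zneg n => Cinv (Cpow z (Pos.to_nat n))
  end.

Arguments cpowZ z k%_Z_scope.

Definition cprod (l : list nat) (f : nat -> C) : C :=
  fold_right (fun i acc => f i * acc) C1 l.
Definition csum {A} (l : list A) (f : A -> C) : C :=
  fold_right (fun x acc => f x + acc) C0 l.

Definition partial_prod (f : nat -> C) (N : nat) : C := cprod (seq 0 N) f.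
Definition inf_prod (f : nat -> C) : C :=
  (real (Lim_seq (fun N => fst (partial_prod f N))),
   real (Lim_seq (fun N => snd (partial_prod f N)))).

Definition qpoch_inf (p x : C) : C := inf_prod (fun k => C1 - x * Cpow p k).

Definition Eth (p x : C) : C := qpoch_inf p x * qpoch_inf p (p / x).

Definition ellpoch (q p a : C) (m : Z) : C :=
  match m with
  | Z0 => C1
  | Zpos k => cprod (seq 0 (Pos.to_nat k)) (fun j => Eth p (a * Cpow q j))
  | Zneg k => Cinv (cprod (seq 0 (Pos.to_nat k))
                          (fun j => Eth p (a * cpowZ q (Zneg k) * Cpow q j)))
  end.

(* partitions with n parts are lists of length n; part i (1-based) *)
Definition part (l : list nat) (i : nat) : nat := nth (i - 1) l 0%nat.
Definition partZ (l : list nat) (i : nat) : Z := Z.of_nat (part l i).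

Definition ellpoch_part (q p t a : C) (l : list nat) : C :=
  cprod (seq 1 (length l))
    (fun i => ellpoch q p (a * cpowZ t (1 - Z.of_nat i)) (partZ l i)).

Definition is_partition (n : nat) (l : list nat) : Prop :=
  length l = n /\ forall i, (1 <= i < n)%nat -> (part l (S i) <= part l i)%nat.

Definition interlaces (l m : list nat) : bool :=
  Nat.eqb (length l) (length m) &&
  forallb (fun i => Nat.leb (part l (S i)) (part m i) && Nat.leb (part m i) (part l i))
          (seq 1 (length l)).

Definition H_fac (q p t b : C) (l m : list nat) : C :=
  let n := length l in
  let L := partZ l in let M := partZ m in
  let P c k := ellpoch q p c k in
  cprod (seq 1 n) (fun i => cprod (seq (S i) (n - i)) (fun j =>
    let iz := Z.of_nat i in let jz := Z.of_nat j in
    let s := (M (j - 1)%nat - L j)%Z in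
    (P (cpowZ q (M i - M (j-1)%nat) * cpowZ t (jz - iz)) s
      * P (cpowZ q (L i + L j) * cpowZ t (3 - jz - iz) * b) s)
    / (P (cpowZ q (M i - M (j-1)%nat + 1) * cpowZ t (jz - iz - 1)) s
      * P (cpowZ q (L i + L j + 1) * cpowZ t (2 - jz - iz) * b) s)
    * (P (cpowZ q (L i - M (j-1)%nat + 1) * cpowZ t (jz - iz - 1)) s
      / P (cpowZ q (L i - M (j-1)%nat) * cpowZ t (jz - iz)) s)))
  * cprod (seq 1 n) (fun i => cprod (seq (S (S i)) (n - i)) (fun j =>
    let iz := Z.of_nat i in let jz := Z.of_nat j in
    let s := (M (j - 1)%nat - L j)%Z in
    P (cpowZ q (M i + L j + 1) * cpowZ t (1 - jz - iz) * b) s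
    / P (cpowZ q (M i + L j) * cpowZ t (2 - jz - iz) * b) s)).

Definition W1 (q p t a b x : C) (l m : list nat) : C :=
  if interlaces l m then
    let n := length l in
    let PL c := ellpoch_part q p t c l in
    let PM c := ellpoch_part q p t c m in
    H_fac q p t b l m
    * (PL (/ x) * PL (a * x) * PM (q * b * x / t) * PM (q * b / (a * x * t)))
    / (PM (/ x) * PM (a * x) * PL (q * b * x) * PL (q * b / (a * x)))
    * cprod (seq 1 n) (fun i =>
        let iz := Z.of_nat i in
        let k := (partZ m i + partZ l (S i))%Z in
        Eth p (b * cpowZ t (1 - 2 * iz) * cpowZ q (2 * partZ m i))
          / Eth p (b * cpowZ t (1 - 2 * iz))
        * (ellpoch q p (b * cpowZ t (1 - 2 * iz)) k
           / ellpoch q p (b * q * cpowZ t (- 2 * iz)) k)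
        * cpowZ t (iz * (partZ m i - partZ l (S i))))
  else C0.

Fixpoint interlacing_below (l : list nat) : list (list nat) :=
  match l with
  | [] => [[]]
  | x :: rest =>
      let lo := match rest with [] => 0%nat | y :: _ => y end in
      flat_map (fun v => map (cons v) (interlacing_below rest)) (seq lo (S x - lo))
  end.

Fixpoint Wskew (q p t : C) (xs : list C) (a b : C) (l m : list nat) {struct xs} : C :=
  match xs with
  | [] => if list_eq_dec Nat.eq_dec l m then C1 else C0
  | [y] => W1 q p t a b y l m
  | y :: zs =>
      let ell := Z.of_nat (length zs) in
      csum (interlacing_below l) (fun nu =>
        W1 q p t (a * cpowZ t (2 * ell)) (b * cpowZ t ell) (y * cpowZ t (- ell)) l nu
        * Wskew q p t zs a b nu m)
  end.

Definition W (q p t a b : C) (xs : list C) (l : list nat) : C :=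
  Wskew q p t xs a b l (repeat 0%nat (length l)).

Definition qpowC (q : R) (u : C) : C := Cexp (u * RtoC (ln q)).

(* u with its i-th coordinate (0-based) shifted by s *)
Definition shift_at (u : nat -> C) (i : nat) (s : C) : nat -> C :=
  fun j => if Nat.eqb j i then u j + s else u j.

(* the variables x_j = q^{u_j}, j = 1..n (stored 0-based) *)
Definition xs_of (q : R) (n : nat) (u : nat -> C) : list C :=
  map (fun j => qpowC q (u j)) (seq 0 n).

From Pilot Require Import Defs.
From Stdlib Require Import Reals List Lia Lra FunctionalExtensionality.
From Coquelicot Require Import Coquelicot.
Open Scope C_scope.

(* The variables enter W only through x_j = q^(u_j): the shift of u_i by 2 pi i / log q
   leaves x_i unchanged, and the shift by log p / log q replaces x_i by p x_i.  The
   functional equation (x;p)_oo = (1 - x) (px;p)_oo gives E(px) = - E(x) / x, hence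
   E(pX) E(Y/p) = E(X) E(Y) Y/(pX).  In each one-variable factor W_(lam/mu)(x) the
   x-dependent elliptic shifted factorials come in such pairs, (ax, 1/x) and
   (qbx/t, qb/(axt)) in the numerator, (ax, 1/x) and (qbx, qb/(ax)) in the denominator,
   and under x -> px both numerator and denominator pick up the same factor
   (a p x^2)^-(|lam| + |mu|), which cancels.  The branching recursion defining W then
   transports the invariance to every variable.  No property of lam beyond being a list
   of parts is used. *)

Lemma ex_finite_lim_seq_geom_increments (u : nat -> R) (M r : R) :
  (0 <= r < 1)%R -> (forall N, Rabs (u (S N) - u N) <= M * r ^ N)%R ->
  ex_finite_lim_seq u.
Proof.
  intros Hr Hinc.
  assert (Hs : ex_series (fun N => (u (S N) - u N)%R)).
  { apply (@ex_series_le R_AbsRing R_CompleteNormedModule _ (fun N => M * r ^ N)%R).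
    - exact Hinc.
    - apply (ex_series_scal_l M (fun N => r ^ N)%R), ex_series_geom.
      rewrite Rabs_pos_eq; lra. }
  destruct Hs as [s Hs].
  assert (Htelescope : forall N, sum_n (fun k => (u (S k) - u k)%R) N = (u (S N) - u O)%R).
  { induction N as [|N IH].
    - now rewrite sum_O.
    - rewrite sum_Sn, IH. unfold plus; simpl. ring. }
  exists (s + u O)%R. apply is_lim_seq_incr_1.
  apply (is_lim_seq_ext (fun N => sum_n (fun k => (u (S k) - u k)%R) N + u O)%R).
  - intros N. rewrite Htelescope. ring.
  - apply is_lim_seq_plus'; [exact Hs | apply is_lim_seq_const].
Qed.

Lemma Cinv_0 : / (0 : C) = 0.
Proof. unfold Cinv. apply injective_projections; simpl; unfold Rdiv; ring. Qed.

Lemma Cinv_neq_0 (z : C) : z <> 0 -> / z <> 0.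
Proof.
  intros Hz E. apply C1_nz. rewrite <- (Cinv_r z Hz), E. apply Cmult_0_r.
Qed.

Lemma Cdiv_neq_0 (y z : C) : y <> 0 -> z <> 0 -> y / z <> 0.
Proof. intros Hy Hz. apply Cmult_neq_0; [|apply Cinv_neq_0]; assumption. Qed.

Lemma cpowZ_neq_0 (z : C) (k : Z) : z <> 0 -> cpowZ z k <> 0.
Proof.
  intros Hz. destruct k; simpl.
  - exact C1_nz.
  - now apply Cpow_nz.
  - now apply Cinv_neq_0, Cpow_nz.
Qed.

#[local] Hint Resolve Cmult_neq_0 Cinv_neq_0 Cdiv_neq_0 Cpow_nz cpowZ_neq_0 : neq_0.

(* No hypothesis [D <> 0] is needed, since [/ 0 = 0]. *)
Lemma Cdiv_mul_cancel_r (H N D F : C) : F <> 0 -> H * (N * F) / (D * F) = H * N / D.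
Proof.
  intros HF. destruct (Ceq_dec D 0) as [-> | HD].
  - rewrite Cmult_0_l. unfold Cdiv. rewrite Cinv_0. ring.
  - field. auto.
Qed.

Lemma cprod_app (l1 l2 : list nat) (f : nat -> C) :
  cprod (l1 ++ l2) f = cprod l1 f * cprod l2 f.
Proof. induction l1 as [|i l1 IH]; simpl; unfold Defs.C1; [ring | rewrite IH; ring]. Qed.

Lemma cprod_ext (l : list nat) (f g : nat -> C) :
  (forall i, In i l -> f i = g i) -> cprod l f = cprod l g.
Proof. induction l as [|i l IH]; simpl; intros H; auto. rewrite H, IH; auto. Qed.

Lemma cprod_mul (l : list nat) (f g : nat -> C) :
  cprod l (fun i => f i * g i) = cprod l f * cprod l g.
Proof. induction l as [|i l IH]; simpl; unfold Defs.C1; [ring | rewrite IH; ring]. Qed.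

Lemma cprod_seq_S (s N : nat) (f : nat -> C) :
  cprod (seq (S s) N) f = cprod (seq s N) (fun k => f (S k)).
Proof. revert s; induction N as [|N IH]; intros s; simpl; [|rewrite IH]; reflexivity. Qed.

Lemma cprod_neq_0 (l : list nat) (f : nat -> C) :
  (forall i, In i l -> f i <> 0) -> cprod l f <> 0.
Proof.
  induction l as [|i l IH]; simpl; intros H.
  - exact C1_nz.
  - apply Cmult_neq_0; auto.
Qed.

Lemma cprod_const (s k : nat) (K : C) : cprod (seq s k) (fun _ => K) = K ^ k.
Proof. revert s; induction k as [|k IH]; intros s; simpl; [|rewrite IH]; reflexivity. Qed.

Lemma inf_prod_cons (f : nat -> C) :
  ex_finite_lim_seq (fun N => fst (partial_prod (fun k => f (S k)) N)) ->
  ex_finite_lim_seq (fun N => snd (partial_prod (fun k => f (S k)) N)) ->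
  inf_prod f = f O * inf_prod (fun k => f (S k)).
Proof.
  intros [la Ha] [lb Hb].
  assert (Hcons : forall N, partial_prod f (S N) = f O * partial_prod (fun k => f (S k)) N).
  { intros N. unfold partial_prod. simpl. now rewrite cprod_seq_S. }
  unfold inf_prod.
  rewrite (is_lim_seq_unique _ _ Ha), (is_lim_seq_unique _ _ Hb).
  rewrite <- (Lim_seq_incr_1 (fun N => fst (partial_prod f N))),
          <- (Lim_seq_incr_1 (fun N => snd (partial_prod f N))).
  set (w := f O).
  rewrite (is_lim_seq_unique _ (fst w * la - snd w * lb)%R),
          (is_lim_seq_unique _ (fst w * lb + snd w * la)%R); [reflexivity | |].
  - apply (is_lim_seq_ext
      (fun N => fst w * snd (partial_prod (fun k => f (S k)) N)
              + snd w * fst (partial_prod (fun k => f (S k)) N))%R).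
    + intros N. now rewrite Hcons.
    + exact (is_lim_seq_plus' _ _ _ _ (is_lim_seq_scal_l _ _ _ Hb)
                                       (is_lim_seq_scal_l _ _ _ Ha)).
  - apply (is_lim_seq_ext
      (fun N => fst w * fst (partial_prod (fun k => f (S k)) N)
              - snd w * snd (partial_prod (fun k => f (S k)) N))%R).
    + intros N. now rewrite Hcons.
    + exact (is_lim_seq_minus' _ _ _ _ (is_lim_seq_scal_l _ _ _ Ha)
                                        (is_lim_seq_scal_l _ _ _ Hb)).
Qed.

Section Theta.

Variable p : C.
Hypothesis p_lt_1 : (Cmod p < 1)%R.
Hypothesis p_neq_0 : p <> 0.

Definition qpoch_partial (z : C) (N : nat) : C :=
  partial_prod (fun k => 1 - z * p ^ k) N.

Lemma qpoch_partial_S (z : C) (N : nat) :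
  qpoch_partial z (S N) = qpoch_partial z N * (1 - z * p ^ N).
Proof.
  unfold qpoch_partial, partial_prod. rewrite seq_S, cprod_app. simpl. unfold Defs.C1. ring.
Qed.

Lemma qpoch_partial_bound (z : C) (N : nat) :
  (Cmod (qpoch_partial z N) <= exp (Cmod z / (1 - Cmod p)))%R.
Proof.
  pose proof (Cmod_ge_0 p). pose proof (Cmod_ge_0 z).
  assert (Hgeom : forall M, (Cmod (qpoch_partial z M)
                             <= exp (Cmod z * (1 - Cmod p ^ M) / (1 - Cmod p)))%R).
  { induction M as [|M IH].
    - unfold qpoch_partial, partial_prod. simpl. unfold Defs.C1. rewrite Cmod_1.
      replace (Cmod z * (1 - 1) / (1 - Cmod p))%R with 0%R by (field; lra).
      rewrite exp_0. lra.
    - rewrite qpoch_partial_S, Cmod_mult.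
      assert (Hfactor : (Cmod (1 - z * p ^ M) <= exp (Cmod z * Cmod p ^ M))%R).
      { eapply Rle_trans; [apply Cmod_triangle|].
        rewrite Cmod_opp, Cmod_1, Cmod_mult, Cmod_pow. apply exp_ineq1_le. }
      eapply Rle_trans; [apply Rmult_le_compat; try apply Cmod_ge_0; eassumption|].
      rewrite <- exp_plus. apply Req_le. f_equal. simpl. field. lra. }
  assert (Hexponent : (Cmod z * (1 - Cmod p ^ N) / (1 - Cmod p) <= Cmod z / (1 - Cmod p))%R).
  { apply Rmult_le_compat_r; [left; apply Rinv_0_lt_compat; lra|].
    pose proof (pow_le (Cmod p) N). nra. }
  eapply Rle_trans; [apply Hgeom|].
  destruct Hexponent as [Hlt | ->]; [left; now apply exp_increasing | apply Rle_refl].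
Qed.

Lemma qpoch_partial_increment (z : C) (N : nat) :
  (Cmod (qpoch_partial z (S N) - qpoch_partial z N)
     <= exp (Cmod z / (1 - Cmod p)) * Cmod z * Cmod p ^ N)%R.
Proof.
  rewrite qpoch_partial_S.
  replace (qpoch_partial z N * (1 - z * p ^ N) - qpoch_partial z N)
    with (- (qpoch_partial z N * (z * p ^ N))) by ring.
  rewrite Cmod_opp, !Cmod_mult, Cmod_pow, !Rmult_assoc.
  apply Rmult_le_compat_r; [|apply qpoch_partial_bound].
  apply Rmult_le_pos; [apply Cmod_ge_0 | apply pow_le, Cmod_ge_0].
Qed.

Lemma qpoch_partial_ex_lim (z : C) :
  ex_finite_lim_seq (fun N => fst (qpoch_partial z N)) /\
  ex_finite_lim_seq (fun N => snd (qpoch_partial z N)).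
Proof.
  pose proof (Cmod_ge_0 p).
  split;
    apply (ex_finite_lim_seq_geom_increments _ (exp (Cmod z / (1 - Cmod p)) * Cmod z) (Cmod p));
    try lra; intros N; eapply Rle_trans; try apply qpoch_partial_increment;
    eapply Rle_trans; try apply Rmax_Cmod; [apply Rmax_l | apply Rmax_r].
Qed.

Lemma qpoch_inf_cons (z : C) : qpoch_inf p z = (1 - z) * qpoch_inf p (p * z).
Proof.
  assert (Htail : (fun k => 1 - z * p ^ S k) = (fun k => 1 - p * z * p ^ k)).
  { apply functional_extensionality. intros k. simpl. ring. }
  destruct (qpoch_partial_ex_lim (p * z)) as [Hfst Hsnd].
  unfold qpoch_inf. rewrite inf_prod_cons; change Defs.C1 with (RtoC 1); rewrite Htail.
  - f_equal. ring.
  - exact Hfst.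
  - exact Hsnd.
Qed.

Lemma Eth_mul_p (c : C) : c <> 0 -> Eth p (p * c) = - Eth p c / c.
Proof.
  intros Hc. unfold Eth.
  replace (p / (p * c)) with (/ c) by (field; auto).
  rewrite (qpoch_inf_cons c), (qpoch_inf_cons (/ c)).
  unfold Cdiv. field. exact Hc.
Qed.

Lemma Eth_mul_div_p (X Y : C) : X <> 0 -> Y <> 0 ->
  Eth p (p * X) * Eth p (Y / p) = Eth p X * Eth p Y * (Y / (X * p)).
Proof.
  intros HX HY.
  assert (HYp : Y / p <> 0) by auto with neq_0.
  pose proof (Eth_mul_p (Y / p) HYp) as HEY.
  replace (p * (Y / p)) with Y in HEY by (field; auto).
  assert (HEYp : Eth p (Y / p) = - (Y / p) * Eth p Y) by (rewrite HEY; field; auto).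
  rewrite Eth_mul_p, HEYp by auto. field. auto.
Qed.

End Theta.

Lemma ellpoch_of_nat (q p c : C) (k : nat) :
  ellpoch q p c (Z.of_nat k) = cprod (seq 0 k) (fun j => Eth p (c * q ^ j)).
Proof. destruct k; [reflexivity|]. simpl. now rewrite SuccNat2Pos.id_succ. Qed.

Definition pow_weight (K : C) (l : list nat) : C :=
  cprod (seq 1 (length l)) (fun i => K ^ part l i).

Lemma pow_weight_neq_0 (K : C) (l : list nat) : K <> 0 -> pow_weight K l <> 0.
Proof. intros HK. apply cprod_neq_0. intros i _. auto with neq_0. Qed.

Section QuasiPeriodicity.

Variables p q t : C.
Hypothesis p_lt_1 : (Cmod p < 1)%R.
Hypothesis p_neq_0 : p <> 0.
Hypothesis q_neq_0 : q <> 0.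
Hypothesis t_neq_0 : t <> 0.

Lemma ellpoch_mul_div_p (c d : C) (k : nat) : c <> 0 -> d <> 0 ->
  ellpoch q p (p * c) (Z.of_nat k) * ellpoch q p (d / p) (Z.of_nat k)
  = ellpoch q p c (Z.of_nat k) * ellpoch q p d (Z.of_nat k) * (d / (c * p)) ^ k.
Proof.
  intros Hc Hd. rewrite !ellpoch_of_nat, <- (cprod_const 0), <- !cprod_mul.
  apply cprod_ext. intros j _.
  assert (Hqj : q ^ j <> 0) by auto with neq_0.
  replace (p * c * q ^ j) with (p * (c * q ^ j)) by ring.
  replace (d / p * q ^ j) with (d * q ^ j / p) by (field; auto).
  rewrite Eth_mul_div_p by auto with neq_0. f_equal. field. auto.
Qed.

Lemma ellpoch_part_mul_div_p (c d : C) (l : list nat) : c <> 0 -> d <> 0 ->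
  ellpoch_part q p t (p * c) l * ellpoch_part q p t (d / p) l
  = ellpoch_part q p t c l * ellpoch_part q p t d l * pow_weight (d / (c * p)) l.
Proof.
  intros Hc Hd. unfold ellpoch_part, pow_weight. rewrite <- !cprod_mul.
  apply cprod_ext. intros i _.
  set (T := cpowZ t (1 - Z.of_nat i)). assert (HT : T <> 0) by (apply cpowZ_neq_0; auto).
  replace (p * c * T) with (p * (c * T)) by ring.
  replace (d / p * T) with (d * T / p) by (field; auto).
  unfold partZ. rewrite ellpoch_mul_div_p by auto with neq_0.
  f_equal. f_equal. field. auto.
Qed.

(* The numerator and the denominator of [W1] both have this shape. *)
Definition ellpoch_part_quad (a s x : C) (l m : list nat) : C :=
  ellpoch_part q p t (/ x) l * ellpoch_part q p t (a * x) l
  * ellpoch_part q p t (s * x) m * ellpoch_part q p t (s / (a * x)) m.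

Lemma ellpoch_part_quad_mul_p (a s x : C) (l m : list nat) :
  a <> 0 -> s <> 0 -> x <> 0 ->
  ellpoch_part_quad a s (p * x) l m
  = ellpoch_part_quad a s x l m
    * (pow_weight (/ (a * p * x ^ 2)) l * pow_weight (/ (a * p * x ^ 2)) m).
Proof.
  intros Ha Hs Hx. unfold ellpoch_part_quad.
  replace (/ (p * x)) with (/ x / p) by (field; auto).
  replace (s / (a * (p * x))) with (s / (a * x) / p) by (field; auto).
  replace (a * (p * x)) with (p * (a * x)) by ring.
  replace (s * (p * x)) with (p * (s * x)) by ring.
  transitivity ((ellpoch_part q p t (p * (a * x)) l * ellpoch_part q p t (/ x / p) l)
              * (ellpoch_part q p t (p * (s * x)) m * ellpoch_part q p t (s / (a * x) / p) m));
    [ring|].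
  rewrite !ellpoch_part_mul_div_p by auto with neq_0.
  replace (/ x / (a * x * p)) with (/ (a * p * x ^ 2)) by (field; auto).
  replace (s / (a * x) / (s * x * p)) with (/ (a * p * x ^ 2)) by (field; auto).
  ring.
Qed.

Lemma W1_mul_p (a b x : C) (l m : list nat) : a <> 0 -> b <> 0 -> x <> 0 ->
  W1 q p t a b (p * x) l m = W1 q p t a b x l m.
Proof.
  intros Ha Hb Hx.
  assert (Hnum : forall y : C, y <> 0 ->
    ellpoch_part q p t (/ y) l * ellpoch_part q p t (a * y) l
    * ellpoch_part q p t (q * b * y / t) m * ellpoch_part q p t (q * b / (a * y * t)) m
    = ellpoch_part_quad a (q * b / t) y l m).
  { intros y Hy. unfold ellpoch_part_quad.
    replace (q * b * y / t) with (q * b / t * y) by (field; auto).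
    replace (q * b / (a * y * t)) with (q * b / t / (a * y)) by (field; repeat split; auto).
    reflexivity. }
  unfold W1. destruct (interlaces l m); [|reflexivity]. cbv zeta.
  rewrite !Hnum by auto with neq_0.
  change (ellpoch_part q p t (/ ?y) m * ellpoch_part q p t (a * ?y) m
          * ellpoch_part q p t (q * b * ?y) l * ellpoch_part q p t (q * b / (a * ?y)) l)
    with (ellpoch_part_quad a (q * b) y m l).
  rewrite !ellpoch_part_quad_mul_p by auto with neq_0.
  rewrite (Cmult_comm (pow_weight _ m)), Cdiv_mul_cancel_r; [reflexivity|].
  apply Cmult_neq_0; apply pow_weight_neq_0; auto with neq_0.
Qed.

Lemma Wskew_cons (y a b : C) (zs : list C) (l m : list nat) : zs <> nil ->
  Wskew q p t (y :: zs) a b l m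
  = csum (interlacing_below l) (fun nu =>
      W1 q p t (a * cpowZ t (2 * Z.of_nat (length zs))) (b * cpowZ t (Z.of_nat (length zs)))
         (y * cpowZ t (- Z.of_nat (length zs))) l nu
      * Wskew q p t zs a b nu m).
Proof. destruct zs; [congruence | reflexivity]. Qed.

Lemma Wskew_mul_p (xs1 xs2 : list C) (y a b : C) (l m : list nat) :
  a <> 0 -> b <> 0 -> y <> 0 ->
  Wskew q p t (xs1 ++ p * y :: xs2) a b l m = Wskew q p t (xs1 ++ y :: xs2) a b l m.
Proof.
  intros Ha Hb Hy. revert l. induction xs1 as [|z xs1 IH]; intros l.
  - destruct xs2 as [|w xs2]; [now apply W1_mul_p|].
    simpl app. rewrite !Wskew_cons by discriminate.
    f_equal. apply functional_extensionality. intros nu. f_equal.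
    rewrite <- Cmult_assoc. apply W1_mul_p; auto with neq_0.
  - simpl app. rewrite !Wskew_cons by (destruct xs1; discriminate).
    rewrite !length_app. simpl length.
    f_equal. apply functional_extensionality. intros nu. f_equal. apply IH.
Qed.

End QuasiPeriodicity.

Lemma Cexp_add (z w : C) : Cexp (z + w) = Cexp z * Cexp w.
Proof.
  destruct z as [z1 z2], w as [w1 w2]. unfold Cexp. simpl.
  apply injective_projections; simpl; rewrite exp_plus;
    [rewrite cos_plus | rewrite sin_plus]; ring.
Qed.

Lemma Cexp_neq_0 (z : C) : Cexp z <> 0.
Proof.
  intros E. apply C1_nz.
  replace (RtoC 1) with (Cexp (z + - z)).
  - rewrite Cexp_add, E. apply Cmult_0_l.
  - replace (z + - z) with (RtoC 0) by ring. unfold Cexp. simpl.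
    rewrite exp_0, cos_0, sin_0. apply injective_projections; simpl; ring.
Qed.

Lemma Cexp_2PI_i : Cexp (0%R, (2 * PI)%R) = 1.
Proof.
  unfold Cexp. simpl. rewrite exp_0, cos_2PI, sin_2PI.
  apply injective_projections; simpl; ring.
Qed.

Lemma qpowC_add_div_ln (q : R) (v L : C) : (0 < q < 1)%R ->
  qpowC q (v + L / RtoC (ln q)) = Cexp L * qpowC q v.
Proof.
  intros Hq. unfold qpowC.
  assert (Hln : RtoC (ln q) <> 0).
  { intros E. injection E as E. rewrite <- ln_1 in E.
    apply ln_inv in E; lra. }
  replace ((v + L / RtoC (ln q)) * RtoC (ln q)) with (v * RtoC (ln q) + L) by (field; auto).
  rewrite Cexp_add. ring.
Qed.

Lemma xs_of_shift_at (q : R) (n i : nat) (u : nat -> C) : (i < n)%nat ->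
  exists xs1 xs2, forall s : C,
    xs_of q n (shift_at u i s) = xs1 ++ qpowC q (u i + s) :: xs2
    /\ xs_of q n u = xs1 ++ qpowC q (u i) :: xs2.
Proof.
  intros Hi.
  exists (map (fun j => qpowC q (u j)) (seq 0 i)),
         (map (fun j => qpowC q (u j)) (seq (S i) (n - S i))).
  intros s. unfold xs_of.
  replace n with (i + S (n - S i))%nat at 1 3 by lia.
  rewrite !seq_app, !map_app. simpl. split; [|reflexivity].
  unfold shift_at. rewrite Nat.eqb_refl.
  f_equal; [|f_equal]; apply map_ext_in; intros j Hj; apply in_seq in Hj;
    destruct (Nat.eqb_spec j i); lia || reflexivity.
Qed.

Theorem mainTheorem11 :
  forall (n : nat) (lam : list nat) (q : R) (p t a b : C) (u : nat -> C) (i : nat),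
    is_partition n lam ->
    (0 < q < 1)%R ->
    (0 < Cmod p < 1)%R ->
    t <> C0 -> a <> C0 -> b <> C0 ->
    (i < n)%nat ->
    W (RtoC q) p t a b (xs_of q n (shift_at u i ((0%R, (2 * PI)%R) / RtoC (ln q)))) lam
      = W (RtoC q) p t a b (xs_of q n u) lam
    /\
    (forall L : C, Cexp L = p ->
      W (RtoC q) p t a b (xs_of q n (shift_at u i (L / RtoC (ln q)))) lam
        = W (RtoC q) p t a b (xs_of q n u) lam).
Proof.
  intros n lam q p t a b u i _ Hq Hp Ht Ha Hb Hi.
  assert (Hp0 : p <> 0) by (intros E; rewrite E, Cmod_0 in Hp; lra).
  assert (Hq0 : RtoC q <> 0) by (intros E; injection E; lra).
  destruct (xs_of_shift_at q n i u Hi) as (xs1 & xs2 & Hxs).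
  split.
  - destruct (Hxs ((0%R, (2 * PI)%R) / RtoC (ln q))) as [-> ->].
    rewrite qpowC_add_div_ln, Cexp_2PI_i, Cmult_1_l by exact Hq. reflexivity.
  - intros L HL. destruct (Hxs (L / RtoC (ln q))) as [-> ->].
    rewrite qpowC_add_div_ln, HL by exact Hq.
    apply Wskew_mul_p; [apply Hp | exact Hp0 | exact Hq0 | exact Ht | exact Ha | exact Hb |].
    apply Cexp_neq_0.
Qed.
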